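(* Let $\mathbb S=\bigwedge(\bar\theta_1,\bar\theta_2)$ be the simple $\mathcal C$-module, on which $\bar\theta_a$ acts by (left exterior) multiplication and $\theta_a$ acts as the odd derivation with $\theta_a(\bar\theta_b)=\delta_{ab}$, $\theta_a(1)=0$. Restricted to $\tilde W\subset\mathcal C^\times$, $\mathbb S$ is an irreducible spin representation of $\tilde W$ isomorphic to $U(1,1)$.
   Context: Fix integers $m_1,m_2\ge2$ and set $\zeta_a=e^{i\pi/m_a}$. Let $x_1,\dots,x_4$ be the standard orthonormal basis of $\mathbb R^4$ (complexified to $V=\mathbb C^4$). Let $\mathcal C$ be the complex Clifford algebra generated by $e_1,\dots,e_4$ with $e_je_k+e_ke_j=2\delta_{jk}$, and $\gamma:V\to\mathcal C$ the linear map with $\gamma(x_j)=e_j$. Put $\theta_a=\frac12(e_{2a-1}+ie_{2a})$ and $\bar\theta_a=\frac12(e_{2a-1}-ie_{2a})$ for $a=1,2$. Let $\alpha_p=(\sin(p\pi/m_1),-\cos(p\pi/m_1),0,0)$ ($p=1,\dots,2m_1$), $\beta_q=(0,0,\sin(q\pi/m_2),-\cos(q\pi/m_2))$ ($q=1,\dots,2m_2$), and let $\tilde W\subset\mathcal C^\times$ be the group generated by all $\gamma(\alpha_p),\gamma(\beta_q)$ (the positive double cover of $W=D_{2m_1}\times D_{2m_2}$); it contains $z:=-1$. A representation of $\tilde W$ is spin if $z$ acts by $-1$. Set $\tilde f_1=\gamma(\alpha_{m_1})$, $\tilde f_2=\gamma(\beta_{m_2})$, $\tilde r_1=z\gamma(\alpha_{m_1})\gamma(\alpha_1)$,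 $\tilde r_2=z\gamma(\beta_{m_2})\gamma(\beta_1)$; these together with $z$ generate $\tilde W$. $U(1,1)$ denotes the four-dimensional spin representation of $\tilde W$ with basis $u_1,u_2,u_3,u_4$ on which, in matrix form with respect to this basis, $\tilde f_1=\begin{pmatrix}0&1&0&0\\1&0&0&0\\0&0&0&1\\0&0&1&0\end{pmatrix}$, $\tilde f_2=\begin{pmatrix}0&0&1&0\\0&0&0&-1\\1&0&0&0\\0&-1&0&0\end{pmatrix}$, $\tilde r_1=\mathrm{diag}(\zeta_1,\zeta_1^{-1},\zeta_1,\zeta_1^{-1})$, $\tilde r_2=\mathrm{diag}(\zeta_2,\zeta_2,\zeta_2^{-1},\zeta_2^{-1})$, and $z=-1$. *)

From HB Require Import structures.
From mathcomp Require Import all_boot all_order all_algebra all_field.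
Set Implicit Arguments. Unset Strict Implicit. Unset Printing Implicit Defensive.
Import Order.TTheory GRing.Theory Num.Theory.
Local Open Scope ring_scope.

(* zeta m = e^{i pi / m}: the m-th root of -1 with minimal nonnegative argument *)
Definition zeta (m : nat) : algC := m.-root (-1).

(* cos(p pi / m) = Re (zeta^p), sin(p pi / m) = Im (zeta^p) *)
Definition cosm (m p : nat) : algC := 'Re (zeta m ^+ p).
Definition sinm (m p : nat) : algC := 'Im (zeta m ^+ p).

Definition mx4 (l : seq (seq algC)) : 'M[algC]_4 :=
  \matrix_(i < 4, j < 4) nth 0 (nth [::] l i) j.

(* The module S = /\(tb1, tb2), as column vectors in the basis
   index 0 = 1, 1 = tb1, 2 = tb2, 3 = tb1 tb2.
   Operators are matrices A acting on column vectors: column j of A is the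
   image of the j-th basis vector. *)

(* left exterior multiplication by tb1: 1 |-> tb1, tb2 |-> tb1 tb2 *)
Definition thb1 : 'M[algC]_4 :=
  mx4 [:: [:: 0; 0; 0; 0]; [:: 1; 0; 0; 0]; [:: 0; 0; 0; 0]; [:: 0; 0; 1; 0]].
(* left exterior multiplication by tb2: 1 |-> tb2, tb1 |-> tb2 tb1 = - tb1 tb2 *)
Definition thb2 : 'M[algC]_4 :=
  mx4 [:: [:: 0; 0; 0; 0]; [:: 0; 0; 0; 0]; [:: 1; 0; 0; 0]; [:: 0; -1; 0; 0]].
(* odd derivation theta1 with theta1(tb_b) = delta_1b, theta1(1) = 0:
   tb1 |-> 1, tb1 tb2 |-> tb2 *)
Definition th1 : 'M[algC]_4 :=
  mx4 [:: [:: 0; 1; 0; 0]; [:: 0; 0; 0; 0]; [:: 0; 0; 0; 1]; [:: 0; 0; 0; 0]].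
(* odd derivation theta2: tb2 |-> 1, tb1 tb2 |-> - tb1 *)
Definition th2 : 'M[algC]_4 :=
  mx4 [:: [:: 0; 0; 1; 0]; [:: 0; 0; 0; -1]; [:: 0; 0; 0; 0]; [:: 0; 0; 0; 0]].

(* action of e_1..e_4 on S:  e_{2a-1} = theta_a + thetabar_a,
   e_{2a} = i (thetabar_a - theta_a)  (inverting theta_a = (e_{2a-1} + i e_{2a})/2) *)
Definition Eop (j : 'I_4) : 'M[algC]_4 :=
  match val j with
  | 0 => th1 + thb1
  | 1 => 'i *: (thb1 - th1)
  | 2 => th2 + thb2
  | _ => 'i *: (thb2 - th2)
  end.

Definition gammaS (v : 'rV[algC]_4) : 'M[algC]_4 := \sum_(j < 4) v 0 j *: Eop j.

Definition vec4 (a b c d : algC) : 'rV[algC]_4 :=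
  \row_(j < 4) nth 0 [:: a; b; c; d] j.

Definition alpha (m1 p : nat) : 'rV[algC]_4 := vec4 (sinm m1 p) (- cosm m1 p) 0 0.
Definition beta (m2 q : nat) : 'rV[algC]_4 := vec4 0 0 (sinm m2 q) (- cosm m2 q).

(* Image on S of the group tW generated by the gamma(alpha_p), gamma(beta_q) *)
Inductive in_tW (m1 m2 : nat) : 'M[algC]_4 -> Prop :=
  | tW_alpha p : (1 <= p <= 2 * m1)%N -> in_tW m1 m2 (gammaS (alpha m1 p))
  | tW_beta q : (1 <= q <= 2 * m2)%N -> in_tW m1 m2 (gammaS (beta m2 q))
  | tW_one : in_tW m1 m2 1%:M
  | tW_mul g h : in_tW m1 m2 g -> in_tW m1 m2 h -> in_tW m1 m2 (g *m h)
  | tW_inv g : in_tW m1 m2 g -> in_tW m1 m2 (invmx g).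

Definition zS : 'M[algC]_4 := - 1%:M.   (* z = -1 in C *)
Definition f1S m1 := gammaS (alpha m1 m1).
Definition f2S m2 := gammaS (beta m2 m2).
Definition r1S m1 := zS *m gammaS (alpha m1 m1) *m gammaS (alpha m1 1).
Definition r2S m2 := zS *m gammaS (beta m2 m2) *m gammaS (beta m2 1).

Definition Uf1 : 'M[algC]_4 :=
  mx4 [:: [:: 0; 1; 0; 0]; [:: 1; 0; 0; 0]; [:: 0; 0; 0; 1]; [:: 0; 0; 1; 0]].
Definition Uf2 : 'M[algC]_4 :=
  mx4 [:: [:: 0; 0; 1; 0]; [:: 0; 0; 0; -1]; [:: 1; 0; 0; 0]; [:: 0; -1; 0; 0]].
Definition Ur1 (m1 : nat) : 'M[algC]_4 :=
  let z := zeta m1 in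
  mx4 [:: [:: z; 0; 0; 0]; [:: 0; z^-1; 0; 0]; [:: 0; 0; z; 0]; [:: 0; 0; 0; z^-1]].
Definition Ur2 (m2 : nat) : 'M[algC]_4 :=
  let z := zeta m2 in
  mx4 [:: [:: z; 0; 0; 0]; [:: 0; z; 0; 0]; [:: 0; 0; z^-1; 0]; [:: 0; 0; 0; z^-1]].
Definition Uz : 'M[algC]_4 := - 1%:M.

Definition clifford_relations : Prop :=
  forall j k : 'I_4, Eop j *m Eop k + Eop k *m Eop j = ((j == k)%:R *+ 2)%:M.

(* subspaces given as row spaces of U (rows = transposed column vectors);
   x |-> g x preserves the subspace iff U *m g^T <= U *)
Definition irreducible_on_S (m1 m2 : nat) : Prop :=
  forall U : 'M[algC]_4,
    (forall g, in_tW m1 m2 g -> (U *m g^T <= U)%MS) ->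
    \rank U = 0%N \/ \rank U = 4%N.

Definition spin_on_S (m1 m2 : nat) : Prop := in_tW m1 m2 zS /\ zS = - 1%:M.

Definition iso_U11 (m1 m2 : nat) : Prop :=
  exists P : 'M[algC]_4, P \in unitmx /\
    f1S m1 *m P = P *m Uf1 /\ f2S m2 *m P = P *m Uf2 /\
    r1S m1 *m P = P *m Ur1 m1 /\ r2S m2 *m P = P *m Ur2 m2 /\
    zS *m P = P *m Uz.

From mathcomp Require Import all_boot all_order all_algebra all_field.
From mathcomp Require Import ring.
Set Implicit Arguments. Unset Strict Implicit. Unset Printing Implicit Defensive.
Import Order.TTheory GRing.Theory Num.Theory.
Local Open Scope ring_scope.

(* In the basis 1, tb1, tb2, tb1 tb2 of S the generators e_j are explicit
   4 x 4 matrices, and the Clifford relations are a direct computation.  Since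
   zeta_a ^ m_a = -1, the reflections f_1, f_2 act as e_2, e_4, so z acts as
   (e_2 e_4)^2 = -1, while r_1 and r_2 act by the diagonal matrices of U(1,1);
   hence diag(1, i, i, -1) intertwines S with U(1,1).  For m_a >= 2, zeta_a
   is not real, so zeta_a <> zeta_a^-1 and
   (r_1 - zeta_1^-1)(r_2 - zeta_2^-1) is a nonzero multiple of the projection
   onto the line of 1.  Multiplying this projection on both sides by the
   monomials 1, e_2, e_4, e_2 e_4 gives every matrix unit, so the span of the
   image of tW is the full matrix algebra and S is irreducible. *)

Section StableMatrices.

Variables (F : fieldType) (m n : nat) (V : 'M[F]_(m, n)).

Lemma stablemxZ a f : stablemx V f -> stablemx V (a *: f).
Proof. by rewrite -mul_scalar_mx; apply: stablemxM; apply: stablemxC. Qed.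

Lemma row_mul_delta i (k l : 'I_n) : row i (V *m delta_mx k l) = V i k *: delta_mx 0 l.
Proof.
apply/rowP => j; rewrite !mxE (bigD1 k) //= big1 => [|k' /negbTE nk'k].
  by rewrite !mxE eqxx addr0; case: (j == l); rewrite ?mulr1 ?mulr0.
by rewrite !mxE nk'k mulr0.
Qed.

Lemma stablemx_delta_rank :
  (forall k l, stablemx V (delta_mx k l)) -> \rank V = 0%N \/ \rank V = n.
Proof.
move=> stV; have [->|/matrix0Pn[i [k Vik_neq0]]] := eqVneq V 0.
  by left; rewrite mxrank0.
right; apply/eqP; rewrite -[_ == _]/(row_full V) -sub1mx.
apply/row_subP => l; rewrite row1.
have <- : (V i k)^-1 *: row i (V *m delta_mx k l) = delta_mx 0 l.
  by rewrite row_mul_delta scalerA mulVf // scale1r.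
exact/scalemx_sub/(submx_trans (row_sub _ _))/stV.
Qed.

End StableMatrices.

Lemma mulmx_anticomm_sqr (R : pzRingType) n (A B : 'M[R]_n) :
  A *m B = - (B *m A) -> A *m A = 1%:M -> B *m B = 1%:M ->
  A *m B *m (A *m B) = - 1%:M.
Proof.
move=> AB A2 B2.
by rewrite mulmxA -(mulmxA A) -[B *m A]opprK -AB mulmxN mulNmx mulmxA A2 mul1mx B2.
Qed.

Section Mx4Calculus.

Variables (c a00 a01 a02 a03 a10 a11 a12 a13 a20 a21 a22 a23 a30 a31 a32 a33
           b00 b01 b02 b03 b10 b11 b12 b13 b20 b21 b22 b23 b30 b31 b32 b33 : algC).

Local Notation A := (mx4 [:: [:: a00; a01; a02; a03]; [:: a10; a11; a12; a13];
                            [:: a20; a21; a22; a23]; [:: a30; a31; a32; a33]]).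
Local Notation B := (mx4 [:: [:: b00; b01; b02; b03]; [:: b10; b11; b12; b13];
                            [:: b20; b21; b22; b23]; [:: b30; b31; b32; b33]]).

Lemma mulmx_mx4 : A *m B = mx4
  [:: [:: a00 * b00 + a01 * b10 + a02 * b20 + a03 * b30;
          a00 * b01 + a01 * b11 + a02 * b21 + a03 * b31;
          a00 * b02 + a01 * b12 + a02 * b22 + a03 * b32;
          a00 * b03 + a01 * b13 + a02 * b23 + a03 * b33];
      [:: a10 * b00 + a11 * b10 + a12 * b20 + a13 * b30;
          a10 * b01 + a11 * b11 + a12 * b21 + a13 * b31;
          a10 * b02 + a11 * b12 + a12 * b22 + a13 * b32;
          a10 * b03 + a11 * b13 + a12 * b23 + a13 * b33];
      [:: a20 * b00 + a21 * b10 + a22 * b20 + a23 * b30;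
          a20 * b01 + a21 * b11 + a22 * b21 + a23 * b31;
          a20 * b02 + a21 * b12 + a22 * b22 + a23 * b32;
          a20 * b03 + a21 * b13 + a22 * b23 + a23 * b33];
      [:: a30 * b00 + a31 * b10 + a32 * b20 + a33 * b30;
          a30 * b01 + a31 * b11 + a32 * b21 + a33 * b31;
          a30 * b02 + a31 * b12 + a32 * b22 + a33 * b32;
          a30 * b03 + a31 * b13 + a32 * b23 + a33 * b33]].
Proof.
apply/matrixP => -[[|[|[|[|//]]]] ?] -[[|[|[|[|//]]]] ?];
by rewrite !mxE !big_ord_recr big_ord0 /= !mxE /= add0r.
Qed.

Lemma addmx_mx4 : A + B = mx4
  [:: [:: a00 + b00; a01 + b01; a02 + b02; a03 + b03];
      [:: a10 + b10; a11 + b11; a12 + b12; a13 + b13];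
      [:: a20 + b20; a21 + b21; a22 + b22; a23 + b23];
      [:: a30 + b30; a31 + b31; a32 + b32; a33 + b33]].
Proof. by apply/matrixP => -[[|[|[|[|//]]]] ?] -[[|[|[|[|//]]]] ?]; rewrite !mxE. Qed.

Lemma oppmx_mx4 : - A = mx4
  [:: [:: - a00; - a01; - a02; - a03]; [:: - a10; - a11; - a12; - a13];
      [:: - a20; - a21; - a22; - a23]; [:: - a30; - a31; - a32; - a33]].
Proof. by apply/matrixP => -[[|[|[|[|//]]]] ?] -[[|[|[|[|//]]]] ?]; rewrite !mxE. Qed.

Lemma scalemx_mx4 : c *: A = mx4
  [:: [:: c * a00; c * a01; c * a02; c * a03]; [:: c * a10; c * a11; c * a12; c * a13];
      [:: c * a20; c * a21; c * a22; c * a23]; [:: c * a30; c * a31; c * a32; c * a33]].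
Proof. by apply/matrixP => -[[|[|[|[|//]]]] ?] -[[|[|[|[|//]]]] ?]; rewrite !mxE. Qed.

Lemma scalar_mx4 : c%:M = mx4
  [:: [:: c; 0; 0; 0]; [:: 0; c; 0; 0]; [:: 0; 0; c; 0]; [:: 0; 0; 0; c]].
Proof. by apply/matrixP => -[[|[|[|[|//]]]] ?] -[[|[|[|[|//]]]] ?]; rewrite !mxE. Qed.

End Mx4Calculus.

Lemma delta_mx4 (k l : 'I_4) : delta_mx k l =
  mx4 [seq [seq ((i == k :> nat) && (j == l :> nat))%:R | j <- iota 0 4] | i <- iota 0 4].
Proof.
by apply/matrixP => -[[|[|[|[|//]]]] ?] -[[|[|[|[|//]]]] ?]; rewrite !mxE /= -!val_eqE.
Qed.

Ltac mx4_ring :=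
  rewrite ?scalar_mx4;
  repeat progress rewrite ?mulmx_mx4 ?addmx_mx4 ?oppmx_mx4 ?scalemx_mx4;
  congr (mx4 [:: [:: _; _; _; _]; [:: _; _; _; _]; [:: _; _; _; _]; [:: _; _; _; _]]);
  ring: (@mulCii algC).

Lemma clifford_relations_S : clifford_relations.
Proof.
move=> j k; rewrite /Eop /th1 /th2 /thb1 /thb2.
by case: j k => -[|[|[|[|//]]]] ? -[[|[|[|[|//]]]] ?] /=; mx4_ring.
Qed.

Lemma Eop_sqr j : Eop j *m Eop j = 1%:M.
Proof.
have two_neq0 : (2%:R : algC) != 0 by rewrite pnatr_eq0.
apply: (scalerI two_neq0); rewrite scaler_nat mulr2n clifford_relations_S eqxx.
by rewrite -scalemx1 scaler_nat.
Qed.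

Lemma Eop_anticomm j k : j != k -> Eop j *m Eop k = - (Eop k *m Eop j).
Proof.
move=> /negbTE jk; apply/eqP; rewrite -addr_eq0 clifford_relations_S jk.
by rewrite mulr0n mul0rn -scalemx1 scale0r.
Qed.

Lemma zS_Eop13 : zS = Eop 1 *m Eop 3 *m (Eop 1 *m Eop 3).
Proof.
by symmetry; apply: mulmx_anticomm_sqr; [exact: Eop_anticomm | exact: Eop_sqr..].
Qed.

Lemma zeta_expm m : (0 < m)%N -> zeta m ^+ m = -1.
Proof. by move=> m_gt0; rewrite /zeta rootCK. Qed.

Lemma zeta_inv m : (0 < m)%N -> (zeta m)^-1 = (zeta m)^*.
Proof.
by move=> m_gt0; rewrite invC_norm norm_rootC normrN1 rootC1 // expr1n invr1 mul1r.
Qed.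

Lemma zeta_nonreal m : (1 < m)%N -> zeta m \isn't Creal.
Proof.
move=> m_gt1; apply/negP => zeta_real.
have zeta_ge0 : 0 <= zeta m by rewrite real_leNgt ?rpred0 // rootC_lt0.
have := exprn_ge0 m zeta_ge0; rewrite zeta_expm ?(ltnW m_gt1) // oppr_ge0.
by rewrite ler10.
Qed.

Lemma zeta_neq_inv m : (1 < m)%N -> zeta m != (zeta m)^-1.
Proof.
by move=> m_gt1; rewrite zeta_inv ?(ltnW m_gt1) // eq_sym -CrealE zeta_nonreal.
Qed.

Lemma gammaS_vec4 a b c d :
  gammaS (vec4 a b c d) = a *: Eop 0 + b *: Eop 1 + c *: Eop 2 + d *: Eop 3.
Proof. by rewrite /gammaS !big_ord_recr big_ord0 /= !mxE add0r. Qed.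

Lemma alpha_mm m : (0 < m)%N -> alpha m m = vec4 0 1 0 0.
Proof.
move=> m_gt0; rewrite /alpha /cosm /sinm zeta_expm //.
by rewrite (Creal_ReP _ _) ?(Creal_ImP _ _) ?opprK // rpredN rpred1.
Qed.

Lemma beta_mm m : (0 < m)%N -> beta m m = vec4 0 0 0 1.
Proof.
move=> m_gt0; rewrite /beta /cosm /sinm zeta_expm //.
by rewrite (Creal_ReP _ _) ?(Creal_ImP _ _) ?opprK // rpredN rpred1.
Qed.

Lemma f1S_Eop m : (0 < m)%N -> f1S m = Eop 1.
Proof.
by move=> m_gt0; rewrite /f1S alpha_mm // gammaS_vec4 !scale0r scale1r !(add0r, addr0).
Qed.

Lemma f2S_Eop m : (0 < m)%N -> f2S m = Eop 3.
Proof. by move=> m_gt0; rewrite /f2S beta_mm // gammaS_vec4 !scale0r scale1r !add0r. Qed.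

Lemma r1S_Ur1 m : (0 < m)%N -> r1S m = Ur1 m.
Proof.
move=> m_gt0; rewrite /r1S -/(f1S m) f1S_Eop // /alpha /cosm /sinm expr1.
rewrite gammaS_vec4 /Ur1 zeta_inv //.
move: (Crect (zeta m)) (Creal_Re (zeta m)) (Creal_Im (zeta m)).
move: ('Re (zeta m)) ('Im (zeta m)) => c s -> c_real s_real.
by rewrite conjC_rect // /zS /Eop /th1 /th2 /thb1 /thb2 /=; mx4_ring.
Qed.

Lemma r2S_Ur2 m : (0 < m)%N -> r2S m = Ur2 m.
Proof.
move=> m_gt0; rewrite /r2S -/(f2S m) f2S_Eop // /beta /cosm /sinm expr1.
rewrite gammaS_vec4 /Ur2 zeta_inv //.
move: (Crect (zeta m)) (Creal_Re (zeta m)) (Creal_Im (zeta m)).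
move: ('Re (zeta m)) ('Im (zeta m)) => c s -> c_real s_real.
by rewrite conjC_rect // /zS /Eop /th1 /th2 /thb1 /thb2 /=; mx4_ring.
Qed.

(* For k = k0 + 2 k1, [Emono k] is e_2^k0 e_4^k1; it maps 1 to a nonzero
   multiple of the k-th basis vector 1, tb1, tb2, tb1 tb2. *)
Definition Emono (k : 'I_4) : 'M[algC]_4 :=
  match val k with 0 => 1%:M | 1 => Eop 1 | 2 => Eop 3 | _ => Eop 1 *m Eop 3 end.

(* Column k is [Emono k] applied to 1, i.e. u_(k+1) |-> e_2^k0 e_4^k1 1. *)
Definition U11_to_S : 'M[algC]_4 :=
  mx4 [:: [:: 1; 0; 0; 0]; [:: 0; 'i; 0; 0]; [:: 0; 0; 'i; 0]; [:: 0; 0; 0; -1]].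

Lemma U11_to_S_unit : U11_to_S \in unitmx.
Proof.
suff /mulmx1_unit[] : U11_to_S *m
  mx4 [:: [:: 1; 0; 0; 0]; [:: 0; - 'i; 0; 0]; [:: 0; 0; - 'i; 0]; [:: 0; 0; 0; -1]] = 1%:M.
  by [].
by rewrite /U11_to_S; mx4_ring.
Qed.

Lemma iso_U11_S m1 m2 : (0 < m1)%N -> (0 < m2)%N -> iso_U11 m1 m2.
Proof.
move=> m1_gt0 m2_gt0; exists U11_to_S.
rewrite f1S_Eop // f2S_Eop // r1S_Ur1 // r2S_Ur2 // /zS /Uz mulNmx mulmxN mul1mx mulmx1.
split; first exact: U11_to_S_unit.
by rewrite /U11_to_S /Eop /th1 /th2 /thb1 /thb2 /Uf1 /Uf2 /Ur1 /Ur2 /=; do !split; mx4_ring.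
Qed.

Lemma Emono_delta00 k :
  exists2 c : algC, c != 0 & Emono k *m delta_mx 0 0 = c *: delta_mx k (0 : 'I_4).
Proof.
rewrite /Emono /Eop /th1 /th2 /thb1 /thb2 !delta_mx4.
case: k => -[|[|[|[|//]]]] ? /=; [exists 1 | exists 'i | exists 'i | exists (-1)];
  rewrite ?(oner_eq0, oppr_eq0, neq0Ci) //; mx4_ring.
Qed.

Lemma delta00_Emono l :
  exists2 c : algC, c != 0 & delta_mx (0 : 'I_4) 0 *m Emono l = c *: delta_mx 0 l.
Proof.
rewrite /Emono /Eop /th1 /th2 /thb1 /thb2 !delta_mx4.
case: l => -[|[|[|[|//]]]] ? /=; [exists 1 | exists (- 'i) | exists (- 'i) | exists 1];
  rewrite ?(oner_eq0, oppr_eq0, neq0Ci) //; mx4_ring.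
Qed.

Lemma Ur1_Ur2_projector m1 m2 :
  (Ur1 m1 - (zeta m1)^-1%:M) *m (Ur2 m2 - (zeta m2)^-1%:M) =
  ((zeta m1 - (zeta m1)^-1) * (zeta m2 - (zeta m2)^-1)) *: delta_mx 0 0.
Proof. by rewrite /Ur1 /Ur2 delta_mx4 /=; mx4_ring. Qed.

Section GroupElements.

Variables (m1 m2 : nat).
Hypotheses (m1_gt0 : (0 < m1)%N) (m2_gt0 : (0 < m2)%N).

Lemma in_tW_Eop1 : in_tW m1 m2 (Eop 1).
Proof. by rewrite -(f1S_Eop m1_gt0); apply: tW_alpha; rewrite m1_gt0 leq_pmull. Qed.

Lemma in_tW_Eop3 : in_tW m1 m2 (Eop 3).
Proof. by rewrite -(f2S_Eop m2_gt0); apply: tW_beta; rewrite m2_gt0 leq_pmull. Qed.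

Lemma in_tW_zS : in_tW m1 m2 zS.
Proof.
have Eop13 := tW_mul in_tW_Eop1 in_tW_Eop3.
by rewrite zS_Eop13; exact: (tW_mul Eop13 Eop13).
Qed.

Lemma in_tW_Ur1 : in_tW m1 m2 (Ur1 m1).
Proof.
rewrite -(r1S_Ur1 m1_gt0) /r1S -/(f1S m1) (f1S_Eop m1_gt0).
by apply: (tW_mul (tW_mul in_tW_zS in_tW_Eop1)); apply: tW_alpha; rewrite muln_gt0.
Qed.

Lemma in_tW_Ur2 : in_tW m1 m2 (Ur2 m2).
Proof.
rewrite -(r2S_Ur2 m2_gt0) /r2S -/(f2S m2) (f2S_Eop m2_gt0).
by apply: (tW_mul (tW_mul in_tW_zS in_tW_Eop3)); apply: tW_beta; rewrite muln_gt0.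
Qed.

Lemma in_tW_Emono k : in_tW m1 m2 (Emono k).
Proof.
case: k => -[|[|[|[|//]]]] ? /=; rewrite /Emono /=.
- exact: tW_one.
- exact: in_tW_Eop1.
- exact: in_tW_Eop3.
- exact: tW_mul in_tW_Eop1 in_tW_Eop3.
Qed.

End GroupElements.

Section Irreducibility.

Variables (m1 m2 : nat) (U : 'M[algC]_4).
Hypotheses (m1_gt1 : (1 < m1)%N) (m2_gt1 : (1 < m2)%N).
Hypothesis U_stable : forall g, in_tW m1 m2 g -> stablemx U g^T.

Let stT (f : 'M[algC]_4) := stablemx U f^T.

Let stTB f g : stT f -> stT g -> stT (f - g).
Proof. by rewrite /stT linearB => fU gU; apply: stablemxD; rewrite ?stablemxN. Qed.

Let stTZ a f : stT f -> stT (a *: f).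
Proof. by rewrite /stT linearZ; apply: stablemxZ. Qed.

Let stTM f g : stT f -> stT g -> stT (f *m g).
Proof. by rewrite /stT trmx_mul => fU gU; apply: stablemxM. Qed.

Let stTC a : stT a%:M.
Proof. by rewrite /stT tr_scalar_mx; apply: stablemxC. Qed.

Let stT_delta00 : stT (delta_mx 0 0).
Proof.
have zeta_sub_neq0 m : (1 < m)%N -> zeta m - (zeta m)^-1 != 0.
  by move=> m_gt1; rewrite subr_eq0 zeta_neq_inv.
have c_neq0 := mulf_neq0 (zeta_sub_neq0 _ m1_gt1) (zeta_sub_neq0 _ m2_gt1).
rewrite -(scalerK c_neq0 (delta_mx 0 0)) -Ur1_Ur2_projector.
apply/stTZ/stTM; apply: (stTB _ (stTC _)); apply: U_stable.
  exact: in_tW_Ur1 (ltnW m1_gt1) (ltnW m2_gt1).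
exact: in_tW_Ur2 (ltnW m1_gt1) (ltnW m2_gt1).
Qed.

Let stT_delta k l : stT (delta_mx k l).
Proof.
have [c c_neq0 Ek] := Emono_delta00 k; have [d d_neq0 El] := delta00_Emono l.
have EmonoU j : stT (Emono j).
  by apply/U_stable/in_tW_Emono; apply: ltnW.
rewrite -(mul_delta_mx (0 : 'I_4)) -(scalerK c_neq0 (delta_mx k 0)).
rewrite -(scalerK d_neq0 (delta_mx 0 l)) -Ek -El.
apply: stTM; apply: stTZ; apply: stTM; by [apply: EmonoU | apply: stT_delta00].
Qed.

Lemma tW_stable_rank : \rank U = 0%N \/ \rank U = 4%N.
Proof. by apply: stablemx_delta_rank => k l; rewrite -trmx_delta; apply: stT_delta. Qed.

End Irreducibility.

Lemma irreducible_S m1 m2 : (1 < m1)%N -> (1 < m2)%N -> irreducible_on_S m1 m2.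
Proof. by move=> m1_gt1 m2_gt1 U; apply: tW_stable_rank. Qed.

Theorem proposition2p2 (m1 m2 : nat) (hm1 : (2 <= m1)%N) (hm2 : (2 <= m2)%N) :
  clifford_relations /\ spin_on_S m1 m2 /\ irreducible_on_S m1 m2 /\ iso_U11 m1 m2.
Proof.
have [m1_gt0 m2_gt0] : (0 < m1)%N /\ (0 < m2)%N by split; apply: ltnW.
split; first exact: clifford_relations_S.
split; first by split; first exact: in_tW_zS.
by split; [exact: irreducible_S | exact: iso_U11_S].
Qed.
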